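(* Let $n\ge 2$, let $\tau$ be any permutation of $\{1,\dots,n\}$, let $G_n$ be the graph built from $\tau$ as in the context, and let $m$ be the vertex with $\tau(m)=1$. The greedy walk from $1$ to target $n$ in $G_n$ visits exactly: first all left-to-right minima positions of $\tau$ in increasing order from $1$ to $m$, then all right-to-left minima positions of $\tau$ strictly greater than $m$ in increasing order up to $n$. Consequently the number of steps $S_n$ of this walk satisfies \[ S_n = L_n(\tau)+R_n(\tau)-2 . \]
   Context: Vertices $V=\{1,\dots,n\}\subset\mathbb{Z}$. A permutation $\tau$ of $V$ gives insertion times: vertex $x$ is inserted at time $\tau(x)$. The undirected graph $G_n$ on $V$ is built as follows: start with no edges; for $t=1,\dots,n$, let $x$ be the vertex with $\tau(x)=t$; if some $y<x$ with $\tau(y)<t$ exists, add an edge between $x$ and the largest such $y$; if some $y>x$ with $\tau(y)<t$ exists, add an edge between $x$ and the smallest such $y$. The greedy walk toward target $n$ starts at $x_0=1$ and, from the current vertex $x\ne n$, moves to the neighbor $y$ of $x$ in $G_n$ minimizing $|y-n|$; it stops upon reaching $n$; $S_n$ is its number of moves. For a permutation $\sigma$ of $\{1,\dots,n\}$, position $i$ is a left-to-right minimum if $\sigma(i)<\min\{\sigma(1),\dots,\sigma(i-1)\}$ ($i=1$ always is), and a right-to-left minimum if $\sigma(i)<\min\{\sigma(i+1),\dots,\sigma(n)\}$ ($i=n$ always is); $L_n(\sigma)$ and $R_n(\sigma)$ are the numbers of left-to-right and right-to-left minima. *)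

From mathcomp Require Import all_boot.
Set Implicit Arguments. Unset Strict Implicit. Unset Printing Implicit Defensive.

(* tau is a permutation of {1,...,n} (its values outside [1,n] are irrelevant) *)
Definition is_perm (n : nat) (tau : nat -> nat) : Prop :=
  perm_eq [seq tau x | x <- iota 1 n] (iota 1 n).

(* largest y < x already inserted when x is inserted (tau y < tau x) *)
Definition left_nb (n : nat) (tau : nat -> nat) (x : nat) : option nat :=
  ohead (rev [seq y <- iota 1 n | (y < x) && (tau y < tau x)]).

(* smallest y > x already inserted when x is inserted *)
Definition right_nb (n : nat) (tau : nat -> nat) (x : nat) : option nat :=
  ohead [seq y <- iota 1 n | (x < y) && (tau y < tau x)].

(* the (undirected) edge {x,y} is added at time t: the vertex v with tau v = t
   is one endpoint and the other is its left or right neighbour at that time *)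
Definition added_at (n : nat) (tau : nat -> nat) (t x y : nat) : bool :=
  has (fun v => (tau v == t) &&
      ( ((x == v) && ((left_nb n tau v == Some y) || (right_nb n tau v == Some y)))
     || ((y == v) && ((left_nb n tau v == Some x) || (right_nb n tau v == Some x)))))
    (iota 1 n).

Definition adj (n : nat) (tau : nat -> nat) (x y : nat) : bool :=
  has (fun t => added_at n tau t x y) (iota 1 n).

Definition dist (a b : nat) : nat := (a - b) + (b - a).

(* one greedy move towards target n: the neighbour y minimizing |y - n|
   (stays put if there is no neighbour) *)
Definition greedy_step (n : nat) (tau : nat -> nat) (x : nat) : nat :=
  match [seq y <- iota 1 n | adj n tau x y] with
  | [::] => x
  | y :: ys => foldl (fun b z => if dist z n < dist b n then z else b) y ys
  end.

Definition greedy_steps (n : nat) (tau : nat -> nat) (k : nat) : Prop :=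
  iter k (greedy_step n tau) 1 = n /\
  forall j, j < k -> iter j (greedy_step n tau) 1 <> n.

Definition greedy_visits (n : nat) (tau : nat -> nat) (k : nat) : seq nat :=
  traject (greedy_step n tau) 1 k.+1.

Definition lr_min (tau : nat -> nat) (i : nat) : bool :=
  all (fun j => tau i < tau j) (iota 1 (i - 1)).

Definition rl_min (n : nat) (tau : nat -> nat) (i : nat) : bool :=
  all (fun j => tau i < tau j) (iota i.+1 (n - i)).

Definition L_n (n : nat) (tau : nat -> nat) : nat := count (lr_min tau) (iota 1 n).
Definition R_n (n : nat) (tau : nat -> nat) : nat := count (rl_min n tau) (iota 1 n).

From mathcomp Require Import all_boot zify.
Set Implicit Arguments. Unset Strict Implicit. Unset Printing Implicit Defensive.

(* Call z a record if it is a left-to-right minimum with z <= m or a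
   right-to-left minimum with z > m, where tau m = 1.  All neighbours of x in
   G_n lie in [1, n], so the greedy walk towards n moves to the largest
   neighbour.  From a record a, the next record b is a neighbour: for b <= m it
   is the right neighbour of a when a was inserted, for b > m the vertex a is
   the left neighbour of b.  A neighbour v > b of a is not a's own right
   neighbour (that is b, or does not exist when a >= m), so v was inserted
   after a with a as its left neighbour; but b lies between them and was
   inserted before v.  Hence the walk visits exactly the records, in
   increasing order. *)

Lemma uniq_map_inj_in (T1 T2 : eqType) (f : T1 -> T2) (s : seq T1) :
  uniq (map f s) -> {in s &, injective f}.
Proof.
move=> uniq_fs x y xs ys fxy.
rewrite -(nth_index x xs) -(nth_index x ys); congr nth; apply/eqP.
rewrite -(nth_uniq (f x) _ _ uniq_fs) ?size_map ?index_mem //.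
by rewrite !(nth_map x) ?index_mem // !nth_index // fxy.
Qed.

Lemma ohead_filter_iota (p : pred nat) a k y :
  ohead [seq z <- iota a k | p z] = Some y ->
  [/\ a <= y < a + k, p y & forall z, a <= z < y -> ~~ p z].
Proof.
elim: k a => [|k IH] a //=; case: ifP => pa /=.
  by case=> <-; split=> //; [lia | move=> z ?; exfalso; lia].
case/IH=> [ya py ylt]; split=> //; first lia.
move=> z za; have [-> |ne] := eqVneq z a; first by rewrite pa.
by apply: ylt; move/eqP: ne; lia.
Qed.

Lemma ohead_rev_filter_iota (p : pred nat) a k y :
  ohead (rev [seq z <- iota a k | p z]) = Some y <->
  [/\ a <= y < a + k, p y & forall z, y < z < a + k -> ~~ p z].
Proof.
have last_spec y' : ohead (rev [seq z <- iota a k | p z]) = Some y' ->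
    [/\ a <= y' < a + k, p y' & forall z, y' < z < a + k -> ~~ p z].
  elim: k y' => [|k IH] y'; first by rewrite addn0.
  rewrite -addn1 iotaD filter_cat rev_cat /=; case: ifP => pk /=.
    by case=> <-; split=> //; [lia | move=> z ?; exfalso; lia].
  move/IH=> [ya py ygt]; split=> //; first lia.
  move=> z zy; have [-> |ne] := eqVneq z (a + k); first by rewrite pk.
  by apply: ygt; move/eqP: ne; lia.
split; first exact: last_spec.
case=> ya py ygt; case E: (rev _) => [|y' s] /=.
  have : y \in rev [seq z <- iota a k | p z] by rewrite mem_rev mem_filter py mem_iota.
  by rewrite E.
have [y'a py' y'gt] := last_spec y' (congr1 ohead E).
have [lt|gt|-> //] := ltngtP y' y.
  suff : ~~ p y by rewrite py.
  by apply: y'gt; lia.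
suff : ~~ p y' by rewrite py'.
by apply: ygt; lia.
Qed.

Lemma foldl_argmin (T : eqType) (d : T -> nat) (y : T) (ys : seq T) :
  let z := foldl (fun b x => if d x < d b then x else b) y ys in
  z \in y :: ys /\ forall w, w \in y :: ys -> d z <= d w.
Proof.
elim: ys y => [|x ys IH] y /=.
  by split=> [|w]; rewrite ?inE // => /eqP ->.
set y' := if d x < d y then x else y.
have [y'_in y'_min] := IH y'.
have y'_le : d y' <= d y /\ d y' <= d x by rewrite /y'; case: ifP; lia.
split.
  by move: y'_in; rewrite !inE /y'; case: ifP => _ /orP [->|->]; rewrite ?orbT.
move=> w; rewrite !inE => /or3P [/eqP ->|/eqP ->|w_in]; last first.
  by apply: y'_min; rewrite inE w_in orbT.
all: by have := y'_min y'; rewrite mem_head; lia.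
Qed.

Lemma exists_argmin_iota (f : nat -> nat) a k : 0 < k ->
  exists2 w, a <= w < a + k & forall j, a <= j < a + k -> f w <= f j.
Proof.
move=> k_gt0.
have ex_val : exists v, has (fun j => f j == v) (iota a k).
  by exists (f a); apply/hasP; exists a; rewrite ?mem_iota ?eqxx //; lia.
case: (ex_minnP ex_val) => v /hasP [w]; rewrite mem_iota => w_in /eqP fw v_min.
exists w => // j j_in; rewrite fw; apply: v_min; apply/hasP; exists j => //.
by rewrite mem_iota.
Qed.

Lemma path_filter_iota (p : pred nat) (r : rel nat) x a k :
  p x -> x < a -> (forall z, x < z < a -> ~~ p z) ->
  (forall u v, x <= u -> u < v < a + k -> p u -> p v ->
     (forall z, u < z < v -> ~~ p z) -> r u v) ->
  path r x [seq z <- iota a k | p z].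
Proof.
elim: k x a => [|k IH] x a px xa x_gap r_next //=.
case: ifP => pa /=.
  apply/andP; split; first by apply: r_next => //; lia.
  apply: IH => //; first by move=> z ?; exfalso; lia.
  by move=> u v ? ?; apply: r_next; lia.
apply: IH => //; first lia.
  move=> z ?; have [-> |ne] := eqVneq z a; first by rewrite pa.
  by apply: x_gap; move/eqP: ne; lia.
by move=> u v ? ?; apply: r_next; lia.
Qed.

Lemma traject_rcons_iter (T : eqType) (f : T -> T) x k s y :
  traject f x k.+1 = rcons s y -> y \notin s ->
  iter k f x = y /\ forall j, j < k -> iter j f x <> y.
Proof.
rewrite trajectSr => /eqP; rewrite eqseq_rcons => /andP [/eqP <- /eqP ->] y_notin.
split=> // j jk iter_j; move: y_notin; rewrite -iter_j.
by rewrite -(nth_traject f jk) mem_nth ?size_traject.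
Qed.

Lemma lr_minP (tau : nat -> nat) i :
  reflect (forall j, 1 <= j < i -> tau i < tau j) (lr_min tau i).
Proof.
apply: (iffP allP) => h j j_in; apply: h; move: j_in; rewrite ?mem_iota; lia.
Qed.

Lemma rl_minP n (tau : nat -> nat) i :
  reflect (forall j, i < j <= n -> tau i < tau j) (rl_min n tau i).
Proof.
apply: (iffP allP) => h j j_in; apply: h; move: j_in; rewrite ?mem_iota; lia.
Qed.

Section GreedyWalk.
Variables (n : nat) (tau : nat -> nat) (m : nat).
Hypotheses (tau_perm : is_perm n tau) (m_range : 1 <= m <= n) (tau_m : tau m = 1).

Lemma tau_range x : 1 <= x <= n -> 1 <= tau x <= n.
Proof.
move=> x_in; have /(map_f tau) : x \in iota 1 n by rewrite mem_iota; lia.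
by rewrite (perm_mem tau_perm) mem_iota; lia.
Qed.

Lemma tau_inj x y : 1 <= x <= n -> 1 <= y <= n -> tau x = tau y -> x = y.
Proof.
move=> x_in y_in; apply: (uniq_map_inj_in (s := iota 1 n)); rewrite ?mem_iota; try lia.
by rewrite (perm_uniq tau_perm) iota_uniq.
Qed.

Lemma tau_gt1 x : 1 <= x <= n -> x != m -> 1 < tau x.
Proof.
move=> x_in x_neq; have := tau_range x_in.
suff : tau x != 1 by lia.
by rewrite -tau_m; apply: contra x_neq => /eqP /(tau_inj x_in m_range) ->.
Qed.

Lemma lr_min_m : lr_min tau m.
Proof. by apply/lr_minP => j j_in; rewrite tau_m tau_gt1 //; lia. Qed.

Lemma rl_min_m : rl_min n tau m.
Proof. by apply/rl_minP => j j_in; rewrite tau_m tau_gt1 //; lia. Qed.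

Lemma lr_min_le_m x : lr_min tau x -> x <= n -> x <= m.
Proof.
move=> /lr_minP x_lr xn; rewrite leqNgt; apply/negP => mx.
by have := @tau_range x (ltac:(lia)); have := x_lr m; rewrite tau_m; lia.
Qed.

Lemma rl_min_ge_m x : rl_min n tau x -> 1 <= x -> m <= x.
Proof.
move=> /rl_minP x_rl x1; rewrite leqNgt; apply/negP => xm.
by have := @tau_range x (ltac:(lia)); have := x_rl m; rewrite tau_m; lia.
Qed.

Lemma left_nbE x y : x <= n ->
  left_nb n tau x = Some y <->
  [/\ 1 <= y < x, tau y < tau x & forall z, y < z < x -> tau x <= tau z].
Proof.
move=> xn; rewrite /left_nb ohead_rev_filter_iota; split.
  case=> y_in /andP [yx tyx] y_last; split=> [|//|z zy]; first lia.
  have := y_last z; rewrite (_ : z < x) /= -?leqNgt; last lia.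
  by apply; lia.
case=> y_in tyx y_last; split; [lia | by rewrite tyx andbT; lia |].
move=> z zy; case: (ltnP z x) => //= zx.
by rewrite -leqNgt; apply: y_last; lia.
Qed.

Lemma right_nbP x y : right_nb n tau x = Some y ->
  [/\ x < y <= n, tau y < tau x & forall z, x < z < y -> tau x <= tau z].
Proof.
rewrite /right_nb => /ohead_filter_iota [y_in /andP [xy tyx] y_first].
split=> [|//|z zy]; first lia.
have := y_first z; rewrite (_ : x < z) /= -?leqNgt; last lia.
by apply; lia.
Qed.

Definition linked v y := (left_nb n tau v == Some y) || (right_nb n tau v == Some y).

Lemma adjP x y :
  adj n tau x y <-> (1 <= x <= n /\ linked x y) \/ (1 <= y <= n /\ linked y x).
Proof.
split.
  case/hasP => t _ /hasP [v]; rewrite mem_iota => v_in /andP [_].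
  by case/orP => /andP [/eqP -> v_linked]; [left | right]; split=> //; lia.
move=> xy_linked.
have [v v_in v_edge] : exists2 v, 1 <= v <= n &
    ((x == v) && linked v y) || ((y == v) && linked v x).
  by case: xy_linked => [[? lk]|[? lk]]; [exists x | exists y]; rewrite ?eqxx ?lk ?orbT.
apply/hasP; exists (tau v); first by rewrite mem_iota; have := tau_range v_in; lia.
by apply/hasP; exists v; [rewrite mem_iota; lia | rewrite eqxx].
Qed.

Lemma greedy_step_max x b : 1 <= b <= n -> adj n tau x b ->
  (forall y, 1 <= y <= n -> adj n tau x y -> y <= b) -> greedy_step n tau x = b.
Proof.
move=> b_in adj_b b_max; rewrite /greedy_step.
have nbs_le y : y \in [seq y <- iota 1 n | adj n tau x y] -> y <= b <= n.
  by rewrite mem_filter mem_iota => /andP [adj_y y_in]; rewrite b_max //; lia.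
have b_nb : b \in [seq y <- iota 1 n | adj n tau x y].
  by rewrite mem_filter adj_b mem_iota; lia.
move: nbs_le b_nb; case: [seq y <- _ | _] => [|y ys] // nbs_le b_nb.
have /= [z_nb z_min] := foldl_argmin (fun z => dist z n) y ys.
have := z_min b b_nb; have := nbs_le _ z_nb; have := nbs_le _ b_nb.
by rewrite /dist; lia.
Qed.

Lemma exists_rl_min_le z : 1 <= z <= n ->
  exists w, [/\ z <= w <= n, rl_min n tau w & tau w <= tau z].
Proof.
move=> z_in; have [w w_in w_min] := @exists_argmin_iota tau z (n - z).+1 isT.
exists w; split; [lia | | by apply: w_min; lia].
apply/rl_minP => j j_in; rewrite ltn_neqAle w_min ?andbT; last lia.
by apply/eqP => /tau_inj; lia.
Qed.

Lemma greedy_step_lr a b : 1 <= a < b -> b <= m -> lr_min tau a -> lr_min tau b ->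
  (forall z, a < z < b -> ~~ lr_min tau z) -> greedy_step n tau a = b.
Proof.
move=> ab bm /lr_minP a_lt /lr_minP b_lt gap.
have tau_ba : tau b < tau a by apply: b_lt; lia.
have [y a_right] : exists y, right_nb n tau a = Some y.
  have : b \in [seq y <- iota 1 n | (a < y) && (tau y < tau a)].
    by rewrite mem_filter tau_ba mem_iota andbT; lia.
  by rewrite /right_nb; case: [seq y <- _ | _] => [|y ?] //; exists y.
have [ay tau_ya y_first] := right_nbP a_right.
have yb : y <= b by rewrite leqNgt; apply/negP => by_; have := y_first b; lia.
have y_lr : lr_min tau y.
  apply/lr_minP => j j_in; case: (ltngtP j a) => [ja | aj | -> //].
    by have := a_lt j; lia.
  by have := y_first j; lia.
have y_eq_b : y = b.
  apply/eqP; rewrite eqn_leq yb leqNgt.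
  by apply: contraL y_lr => y_lt_b; apply: gap; lia.
subst y; apply: greedy_step_max; first lia.
  by apply/adjP; left; rewrite /linked a_right eqxx orbT; split=> //; lia.
move=> y y_in /adjP [[_ /orP [/eqP y_left | /eqP y_right]] |
                    [_ /orP [/eqP a_left | /eqP a_right']]].
- by have [] := (left_nbE _ (ltac:(lia) : a <= n)).1 y_left; lia.
- by move: y_right; rewrite a_right => -[<-].
- have [? ? a_last] := (left_nbE _ (ltac:(lia) : y <= n)).1 a_left.
  by rewrite leqNgt; apply/negP => b_lt_y; have := a_last b; lia.
- by have [] := right_nbP a_right'; lia.
Qed.

Lemma greedy_step_rl a b : m <= a -> a < b <= n -> rl_min n tau a -> rl_min n tau b ->
  (forall z, a < z < b -> ~~ rl_min n tau z) -> greedy_step n tau a = b.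
Proof.
move=> ma ab /rl_minP a_lt /rl_minP b_lt gap.
have tau_ab : tau a < tau b by apply: a_lt; lia.
have b_left : left_nb n tau b = Some a.
  apply/(left_nbE _ (ltac:(lia) : b <= n)); split=> //; first lia.
  move=> z zab; rewrite leqNgt; apply/negP => tau_zb.
  have [w [w_in w_rl w_le]] := @exists_rl_min_le z (ltac:(lia)).
  have w_lt_b : w < b.
    rewrite ltnNge leq_eqVlt; apply/negP => /orP [/eqP bw | bw].
      by move: w_le; rewrite -bw; lia.
    by have := b_lt w; lia.
  by move: w_rl; apply/negP/gap; lia.
apply: greedy_step_max; first lia.
  by apply/adjP; right; rewrite /linked b_left eqxx; split=> //; lia.
move=> y y_in /adjP [[_ /orP [/eqP y_left | /eqP y_right]] |
                    [_ /orP [/eqP a_left | /eqP a_right]]].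
- by have [] := (left_nbE _ (ltac:(lia) : a <= n)).1 y_left; lia.
- by have [? ? _] := right_nbP y_right; have := a_lt y; lia.
- have [? ? a_last] := (left_nbE _ (ltac:(lia) : y <= n)).1 a_left.
  by rewrite leqNgt; apply/negP => b_lt_y; have := a_last b; have := b_lt y; lia.
- by have [] := right_nbP a_right; lia.
Qed.

Definition record z := if z <= m then lr_min tau z else rl_min n tau z.

Lemma greedy_step_record a b : 1 <= a -> a < b <= n -> record a -> record b ->
  (forall z, a < z < b -> ~~ record z) -> greedy_step n tau a = b.
Proof.
rewrite /record => a1 ab ra rb gap.
case: (leqP b m) => [bm | mb].
  move: ra rb; rewrite bm (_ : a <= m); last lia.
  move=> ra rb; apply: greedy_step_lr => // [|z z_in]; first lia.
  by have := gap z z_in; rewrite (_ : z <= m) //; lia.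
have ma : m <= a.
  rewrite leqNgt; apply/negP => am; have /negP := gap m (ltac:(lia)).
  by apply; rewrite leqnn lr_min_m.
have rb' : rl_min n tau b by move: rb; rewrite leqNgt mb.
have ra' : rl_min n tau a.
  have [->|a_neq_m] := eqVneq a m; first exact: rl_min_m.
  by move: ra; rewrite (_ : (a <= m) = false) //; move/eqP: a_neq_m; lia.
apply: greedy_step_rl => // z z_in.
by have := gap z z_in; rewrite (_ : (z <= m) = false) //; lia.
Qed.

Lemma records_traject :
  [seq z <- iota 1 n | record z] =
  traject (greedy_step n tau) 1 (size [seq z <- iota 1 n | record z]).
Proof.
have record1 : record 1 by rewrite /record (_ : 1 <= m) //; lia.
rewrite (_ : iota 1 n = 1 :: iota 2 n.-1); last by case: (n) m_range => [|n'] //=; lia.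
rewrite /= record1 /=; congr (_ :: _); apply: fpathE.
apply: path_filter_iota => // [z|u v ux uv ru rv uv_gap]; first by move=> ?; exfalso; lia.
by apply/eqP; apply: greedy_step_record => //; lia.
Qed.

Lemma iota_split_m : iota 1 n = iota 1 m ++ iota m.+1 (n - m).
Proof. by rewrite -{1}(subnKC (_ : m <= n)) ?iotaD ?add1n //; lia. Qed.

Lemma no_lr_min_after_m : [seq z <- iota m.+1 (n - m) | lr_min tau z] = [::].
Proof.
apply/eqP; rewrite -[_ == _]negbK -has_filter; apply/hasPn => z.
by rewrite mem_iota => z_in; apply/negP => /lr_min_le_m; lia.
Qed.

Lemma records_split :
  [seq z <- iota 1 n | lr_min tau z] ++ [seq z <- iota m.+1 (n - m) | rl_min n tau z] =
  [seq z <- iota 1 n | record z].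
Proof.
rewrite iota_split_m !filter_cat no_lr_min_after_m cats0; congr (_ ++ _).
  apply: eq_in_filter => z; rewrite mem_iota /record => z_in.
  by rewrite (_ : z <= m) //; lia.
apply: eq_in_filter => z; rewrite mem_iota /record => z_in.
by rewrite (_ : (z <= m) = false) //; lia.
Qed.

Lemma size_records :
  size [seq z <- iota 1 n | record z] = (L_n n tau + R_n n tau - 2).+1.
Proof.
have rl_head : count (rl_min n tau) (iota 1 m) = 1.
  transitivity (count_mem m (iota 1 m)); last first.
    by rewrite count_uniq_mem ?iota_uniq // mem_iota (_ : 1 <= m < 1 + m) //; lia.
  apply: eq_in_count => z; rewrite mem_iota => z_in /=.
  have [->|z_neq_m] := eqVneq z m; first exact: rl_min_m.
  by apply/negbTE; apply: contra z_neq_m => /rl_min_ge_m; rewrite eqn_leq; lia.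
have lr_pos : 0 < count (lr_min tau) (iota 1 m).
  by rewrite -has_count; apply/hasP; exists m; rewrite ?mem_iota ?lr_min_m //; lia.
rewrite -records_split size_cat !size_filter /L_n /R_n iota_split_m !count_cat rl_head.
have lr_tail : count (lr_min tau) (iota m.+1 (n - m)) = 0.
  by rewrite -size_filter no_lr_min_after_m.
rewrite lr_tail; move: lr_pos.
by set A := count _ (iota 1 m); set B := count _ (iota m.+1 _); lia.
Qed.

Lemma records_rcons :
  [seq z <- iota 1 n | record z] = rcons [seq z <- iota 1 n.-1 | record z] n.
Proof.
have record_n : record n.
  rewrite /record; case: leqP => [nm | _]; last by apply/rl_minP; lia.
  by rewrite (_ : n = m) ?lr_min_m //; lia.
have -> : iota 1 n = rcons (iota 1 n.-1) n.
  have n_pos : 0 < n by lia.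
  by rewrite -cats1 -{1}(prednK n_pos) -[n.-1.+1]addn1 iotaD add1n prednK.
by rewrite filter_rcons record_n.
Qed.
End GreedyWalk.

Theorem theorem1 (n : nat) (tau : nat -> nat) (m : nat) :
  2 <= n -> is_perm n tau -> 1 <= m <= n -> tau m = 1 ->
  greedy_visits n tau (L_n n tau + R_n n tau - 2) =
    [seq i <- iota 1 n | lr_min tau i] ++ [seq i <- iota m.+1 (n - m) | rl_min n tau i]
  /\ greedy_steps n tau (L_n n tau + R_n n tau - 2).
Proof.
move=> _ tau_perm m_range tau_m.
have walk := records_traject tau_perm m_range tau_m.
rewrite size_records // in walk.
split; first by rewrite /greedy_visits -walk records_split.
apply: (traject_rcons_iter (s := [seq z <- iota 1 n.-1 | record n tau m z])).
  by rewrite -walk records_rcons.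
by rewrite mem_filter mem_iota; apply/negP => /andP [_]; lia.
Qed.
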